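(* Let $n \ge 2$ be an integer. If $M$ is a real $n\times n$ matrix whose entries are a permutation of $0,1,\dots,n^2-1$, then $$|\det M| \le n^n\,\frac{n^2-1}{2}\left(\frac{n^3+n^2+n+1}{12}\right)^{\frac{n-1}{2}}.$$ If $M$ is a real $n\times n$ matrix whose entries are a permutation of $1,2,\dots,n^2$, then $$|\det M| \le n^n\,\frac{n^2+1}{2}\left(\frac{n^3+n^2+n+1}{12}\right)^{\frac{n-1}{2}}.$$ *)

From HB Require Import structures.
From mathcomp Require Import all_boot all_order all_algebra.
Set Implicit Arguments. Unset Strict Implicit. Unset Printing Implicit Defensive.
Import Order.TTheory GRing.Theory Num.Theory.
Local Open Scope ring_scope.

Definition mx_entries (R : Type) (n : nat) (M : 'M[R]_n) : seq R :=
  [seq M ij.1 ij.2 | ij <- enum {: 'I_n * 'I_n}].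

Definition entries_perm_from (R : numDomainType) (n : nat) (a : nat) (M : 'M[R]_n) : bool :=
  perm_eq (mx_entries M) [seq (k%:R : R) | k <- iota a (n ^ 2)].

From HB Require Import structures.
From mathcomp Require Import all_boot all_order all_algebra.
From mathcomp Require Import ring lra.
Set Implicit Arguments. Unset Strict Implicit. Unset Printing Implicit Defensive.
Import Order.TTheory GRing.Theory Num.Theory.
Local Open Scope ring_scope.

(* Let H be an orthogonal matrix whose first column is constant, equal to
   n^-1/2. The Gram matrix G of M H has determinant (det M)^2, trace the sum F
   of the squared entries of M, and first diagonal entry (sum of the squared
   row sums)/n, which lies between (S/n)^2 and F by Cauchy-Schwarz, S being
   the sum of the entries. Hadamard's inequality and AM-GM on the other n - 1
   diagonal entries give (det M)^2 <= g ((F - g)/(n - 1))^(n-1) with g = G 0 0,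
   and this expression decreases in g on [(S/n)^2, F] when F <= n (S/n)^2.
   For entries a, ..., a + n^2 - 1, the numbers S and F are explicit. *)

Local Notation gram X := (X^T *m X).

Section Gram.
Variable R : realFieldType.

Lemma gram_diag m n (X : 'M[R]_(m, n)) j : gram X j j = \sum_i X i j ^+ 2.
Proof. by rewrite !mxE; apply: eq_bigr => i _; rewrite mxE expr2. Qed.

Lemma gram_diag_ge0 m n (X : 'M[R]_(m, n)) j : 0 <= gram X j j.
Proof. by rewrite gram_diag sumr_ge0 // => i _; rewrite sqr_ge0. Qed.

Lemma gram_cV_eq0 m (a : 'cV[R]_m) : (gram a 0 0 == 0) = (a == 0).
Proof.
apply/idP/eqP => [|->]; last by rewrite mulmx0 mxE.
rewrite gram_diag psumr_eq0 => [/allP a0|i _]; last exact: sqr_ge0.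
apply/matrixP => i j; rewrite (ord1 j) mxE.
by apply/eqP; rewrite -sqrf_eq0; exact: a0 (mem_index_enum _).
Qed.

Lemma det_gram_mulmx m n (X : 'M[R]_(m, n)) (U : 'M[R]_n) :
  \det (gram (X *m U)) = \det U ^+ 2 * \det (gram X).
Proof. by rewrite trmx_mul -mulmxA !det_mulmx mulmxA det_mulmx det_tr; ring. Qed.

Definition proj_out m n (a : 'cV[R]_m) (B : 'M[R]_(m, n)) :=
  B - (gram a 0 0)^-1 *: (a *m (a^T *m B)).

Section ProjOut.
Variables (m n : nat) (a : 'cV[R]_m) (B : 'M[R]_(m, n)).
Hypothesis a_neq0 : a != 0.

Let s_neq0 : gram a 0 0 != 0. Proof. by rewrite gram_cV_eq0. Qed.

Lemma tr_mul_proj_out : a^T *m proj_out a B = 0.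
Proof.
rewrite mulmxBr -scalemxAr !mulmxA {2}[gram a]mx11_scalar mul_scalar_mx -scalemxAl.
by rewrite scalerA mulVf // scale1r subrr.
Qed.

Lemma gram_proj_out :
  gram (proj_out a B) = gram B - (gram a 0 0)^-1 *: gram (a^T *m B).
Proof.
have -> : gram (proj_out a B) = (proj_out a B)^T *m B.
  have Pa : (proj_out a B)^T *m a = 0.
    by rewrite -[X in _ *m X]trmxK -trmx_mul tr_mul_proj_out trmx0.
  by rewrite {2}/proj_out mulmxBr -scalemxAr !mulmxA Pa !mul0mx scaler0 subr0.
by rewrite /proj_out linearB /= mulmxBl linearZ /= -scalemxAl trmx_mul mulmxA.
Qed.

Lemma det_gram_row_mx :
  \det (gram (row_mx a B)) = gram a 0 0 * \det (gram (proj_out a B)).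
Proof.
pose U := block_mx 1%:M ((gram a 0 0)^-1 *: (a^T *m B)) 0 (1%:M : 'M[R]_n).
have detU : \det U = 1 by rewrite det_ublock !det1 mulr1.
have -> : row_mx a B = row_mx a (proj_out a B) *m U.
  rewrite mul_row_block !mulmx1 !mulmx0 addr0 /proj_out -scalemxAr.
  by rewrite addrC subrK.
rewrite det_gram_mulmx detU expr1n mul1r tr_row_mx mul_col_row.
by rewrite tr_mul_proj_out det_lblock det_mx11.
Qed.

Lemma gram_diag_proj_out_le j : gram (proj_out a B) j j <= gram B j j.
Proof.
have entryB (X Y : 'M[R]_n) : (X - Y) j j = X j j - Y j j by rewrite !mxE.
rewrite gram_proj_out entryB lerBlDr lerDl mxE.
by rewrite mulr_ge0 ?invr_ge0 ?gram_diag_ge0.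
Qed.

End ProjOut.

Lemma gram_mulmx_const_col m n p (M : 'M[R]_(m, n)) (H : 'M[R]_(n, p)) j c :
  (forall l, H l j = c) -> gram (M *m H) j j = c ^+ 2 * \sum_i (\sum_l M i l) ^+ 2.
Proof.
move=> Hc; rewrite gram_diag mulr_sumr; apply: eq_bigr => i _.
rewrite mxE; under eq_bigr do rewrite Hc.
by rewrite -mulr_suml exprMn mulrC.
Qed.

(* Hadamard: subtracting from the other columns their component along the first
   one factors the determinant as [gram a 0 0] times a Gram determinant whose
   diagonal entries have only decreased. *)
Lemma det_gram_le_prod_diag m n (X : 'M[R]_(m, n)) :
  \det (gram X) <= \prod_j gram X j j.
Proof.
elim: n X => [|n IH] X; first by rewrite det_mx00 big_ord0.
move: X; change n.+1 with (1 + n)%N => X.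
rewrite -[X]hsubmxK; move: (lsubmx X) (rsubmx X) => a B.
have gram_row : gram (row_mx a B) =
    block_mx (gram a) (a^T *m B) (B^T *m a) (gram B).
  by rewrite tr_row_mx mul_col_row.
rewrite big_split_ord big_ord1 /= gram_row block_mxEul.
under eq_bigr do rewrite block_mxEdr.
have [->|a_neq0] := eqVneq a 0.
  by rewrite trmx0 !mul0mx mulmx0 det_ublock det_mx11 !mxE !mul0r.
rewrite -gram_row det_gram_row_mx // ler_wpM2l ?gram_diag_ge0 //.
apply: le_trans (IH _) _; apply: ler_prod => j _.
by rewrite gram_diag_ge0 gram_diag_proj_out_le.
Qed.

Lemma orthomx_with_col0 n (u : 'cV[R]_n.+1) : gram u 0 0 = 1 ->
  exists H : 'M[R]_n.+1, H *m H^T = 1%:M /\ col 0 H = u.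
Proof.
move=> u_unit; pose w := delta_mx 0 0 - u.
have [/eqP|w_neq0] := eqVneq w 0.
  by rewrite subr_eq0 => /eqP <-; exists 1%:M; rewrite trmx1 mulmx1 col1.
pose s := gram w 0 0.
have s_neq0 : s != 0 by rewrite gram_cV_eq0.
have s_eq : s = 2 * w 0 0.
  rewrite /s /w (linearB trmx) /= trmx_delta mulmxBl !mulmxBr mul_delta_mx -rowE -colE.
  by rewrite [gram u]mx11_scalar u_unit !mxE /=; ring.
pose P := w *m w^T; pose c := 2 / s.
have PP : P *m P = s *: P.
  by rewrite mulmxA -(mulmxA w) [w^T *m w]mx11_scalar mul_mx_scalar scalemxAl.
pose H := 1%:M - c *: P.
have HT : H^T = H by rewrite /H linearB linearZ /= trmx1 trmx_mul trmxK.
exists H; split.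
  rewrite HT mulmxBl mulmxBr !mul1mx mulmxBr mulmx1 -scalemxAl -scalemxAr PP.
  rewrite !scalerA (_ : c * c * s = c + c) ?scalerDl; last by rewrite /c; field.
  by rewrite opprB addrK subrK.
have w00_neq0 : w 0 0 != 0 by move: s_neq0; rewrite s_eq mulf_eq0 negb_or => /andP[].
have cw : c * w 0 0 = 1 by rewrite /c s_eq; field.
move: cw; rewrite !mxE eqxx /= => cw.
apply/matrixP => i j; rewrite (ord1 j) !mxE big_ord1 !mxE !eqxx andbT /=.
by rewrite mulrCA cw mulr1 subKr.
Qed.

End Gram.

Section ScalarInequalities.
Variable R : realFieldType.

Lemma ler_sqr_sumr n (f : 'I_n -> R) :
  (\sum_i f i) ^+ 2 <= n%:R * \sum_i f i ^+ 2.
Proof.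
case: n f => [|n] f; first by rewrite !big_ord0 mul0r expr0n.
pose c := (\sum_i f i) / n.+1%:R.
have sum_dev : \sum_i (f i - c) ^+ 2
    = \sum_i f i ^+ 2 - 2 * c * \sum_i f i + c ^+ 2 * n.+1%:R.
  under eq_bigr do rewrite sqrrB -mulr_natr -mulrA mulrC.
  by rewrite !big_split /= sumrN -mulr_sumr sumr_const card_ord -mulr_natr; ring.
have dev_ge0 : 0 <= \sum_i (f i - c) ^+ 2 by apply: sumr_ge0 => i _; exact: sqr_ge0.
rewrite -subr_ge0; suff -> : n.+1%:R * \sum_i f i ^+ 2 - (\sum_i f i) ^+ 2
    = n.+1%:R * \sum_i (f i - c) ^+ 2 by rewrite mulr_ge0.
by rewrite sum_dev /c; field; rewrite addrC natr1 pnatr_eq0.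
Qed.

Lemma ler_bernoulli k (y : R) : 0 <= y -> 1 + k%:R * y <= (1 + y) ^+ k.
Proof.
move=> y_ge0; elim: k => [|k IH]; first by rewrite mul0r addr0 expr0.
have y1_ge0 : 0 <= 1 + y by lra.
have := ler_wpM2l y1_ge0 IH.
have : 0 <= k%:R * y * y by rewrite !mulr_ge0 ?ler0n.
rewrite exprS -natr1; nra.
Qed.

(* Writing [a = b (1 + k y)], Bernoulli gives [a <= b (1 + y) ^+ k], and
   [F <= (k + 1) b] gives [(1 + y) (F - a) <= F - b]. *)
Lemma ler_mul_exprn_avg k (a b F : R) : (0 < k)%N -> 0 < b -> b <= a -> a <= F ->
  F <= k.+1%:R * b -> a * ((F - a) / k%:R) ^+ k <= b * ((F - b) / k%:R) ^+ k.
Proof.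
move=> k_gt0 b_gt0 ba aF Fb.
have k_pos : 0 < (k%:R : R) by rewrite ltr0n.
pose y := (a - b) / (k%:R * b).
have y_ge0 : 0 <= y by rewrite divr_ge0 ?subr_ge0 // mulr_ge0 // ltW.
have a_le : a <= b * (1 + y) ^+ k.
  have -> : a = b * (1 + k%:R * y) by rewrite /y; field; rewrite !lt0r_neq0.
  by apply: ler_wpM2l; [exact: ltW | exact: ler_bernoulli].
have avg_ge0 : 0 <= (F - a) / k%:R by rewrite divr_ge0 ?subr_ge0 // ltW.
apply: le_trans (ler_wpM2r (exprn_ge0 k avg_ge0) a_le) _.
have y1_ge0 : 0 <= 1 + y by rewrite addr_ge0.
have avgb_ge0 : 0 <= (F - b) / k%:R by rewrite divr_ge0 ?subr_ge0 ?(le_trans ba aF) ?ltW.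
rewrite -mulrA -exprMn ler_wpM2l ?(ltW b_gt0) // lerXn2r ?nnegrE ?(mulr_ge0 y1_ge0 avg_ge0) //.
have y_mul : y * (F - a) <= a - b.
  have -> : a - b = y * (k%:R * b) by rewrite /y divfK // mulf_neq0 // lt0r_neq0.
  by rewrite ler_wpM2l //; move: Fb; rewrite -natr1; lra.
by rewrite mulrA ler_pM2r ?invr_gt0 //; lra.
Qed.

End ScalarInequalities.

Section DeterminantBound.
Variable R : rcfType.

Lemma sqr_det_le_orthomx k (M H : 'M[R]_k.+1) : H *m H^T = 1%:M ->
  \det M ^+ 2 <= gram (M *m H) 0 0
                 * ((\sum_i \sum_j M i j ^+ 2 - gram (M *m H) 0 0) / k%:R) ^+ k.
Proof.
move=> HHT; set G := gram (M *m H).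
have detH : \det H ^+ 2 = 1.
  by move/(congr1 determinant): HHT; rewrite det_mulmx det_tr det1 expr2.
have detG : \det G = \det M ^+ 2.
  by rewrite det_gram_mulmx detH mul1r det_mulmx det_tr expr2.
have trG : \sum_j G j j = \sum_i \sum_j M i j ^+ 2.
  rewrite -[LHS]/(\tr G) /G trmx_mul -!mulmxA mxtrace_mulC -!mulmxA HHT mulmx1.
  by rewrite /mxtrace exchange_big; apply: eq_bigr => j _; rewrite gram_diag.
rewrite -detG; apply: le_trans (det_gram_le_prod_diag _) _.
rewrite -/G big_ord_recl ler_wpM2l ?gram_diag_ge0 // -trG big_ord_recl addrC addKr.
have [AGM _] := leif_AGM (A := predT) (E := fun j : 'I_k => G (lift 0 j) (lift 0 j))
  (fun j _ => gram_diag_ge0 _ _).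
by move: AGM; rewrite cardT size_enum_ord.
Qed.

Lemma gram_avg_col0_bounds k (M H : 'M[R]_k.+1) :
    (forall l, H l 0 = (Num.sqrt k.+1%:R)^-1) ->
  ((\sum_i \sum_j M i j) / k.+1%:R) ^+ 2 <= gram (M *m H) 0 0
    <= \sum_i \sum_j M i j ^+ 2.
Proof.
move=> Hc; rewrite (gram_mulmx_const_col _ Hc) exprVn sqr_sqrtr ?ler0n //.
have n_gt0 : 0 < (k.+1%:R : R) by rewrite ltr0n.
apply/andP; split.
  rewrite expr_div_n ler_pdivrMr ?exprn_gt0 // mulrAC expr2 mulrA mulVf ?lt0r_neq0 //.
  by rewrite mul1r ler_sqr_sumr.
by rewrite mulr_sumr ler_sum // => i _; rewrite ler_pdivrMl // ler_sqr_sumr.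
Qed.

Lemma det_le_mean_var n (M : 'M[R]_n) (mu v : R) :
    (1 < n)%N -> 0 < mu -> v <= (n%:R - 1) * mu ^+ 2 ->
    \sum_i \sum_j M i j = n%:R ^+ 2 * mu ->
    \sum_i \sum_j M i j ^+ 2 = n%:R ^+ 2 * (mu ^+ 2 + v) ->
  `|\det M| <= n%:R ^+ n * mu * Num.sqrt (v / (n%:R - 1)) ^+ (n - 1).
Proof.
case: n M => [|[|k]] // M _ mu_gt0 v_le sumM sumM2; rewrite subSS subn0.
set x : R := k.+2%:R.
have x_gt1 : 1 < x by rewrite ltr1n.
have x_gt0 : 0 < x := lt_trans ltr01 x_gt1.
pose u : 'cV[R]_k.+2 := const_mx (Num.sqrt x)^-1.
have u_unit : gram u 0 0 = 1.
  have sqrt_x : Num.sqrt x ^+ 2 = x by rewrite sqr_sqrtr // ler0n.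
  rewrite gram_diag /u; under eq_bigr do rewrite mxE exprVn sqrt_x.
  by rewrite sumr_const card_ord -mulr_natr mulVf ?gt_eqF.
have [H [HHT Hcol]] := orthomx_with_col0 u_unit.
have H0 l : H l 0 = (Num.sqrt x)^-1.
  by move/matrixP: Hcol => /(_ l 0); rewrite !mxE.
have /andP[g_ge g_le] := gram_avg_col0_bounds M H0.
have x_k : x - 1 = k.+1%:R by rewrite /x mulrSr addrK.
have mean_sqr : (x ^+ 2 * mu / x) ^+ 2 = x ^+ 2 * mu ^+ 2.
  by rewrite [x ^+ 2]expr2 mulrAC mulfK ?gt_eqF // exprMn.
rewrite sumM sumM2 -/x mean_sqr in g_ge g_le.
have v_ge0 : 0 <= v.
  by move: (le_trans g_ge g_le); rewrite mulrDr lerDl pmulr_rge0 // exprn_gt0.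
have sum_le : x ^+ 2 * (mu ^+ 2 + v) <= k.+2%:R * (x ^+ 2 * mu ^+ 2).
  by rewrite -/x mulrCA ler_pM2l ?exprn_gt0 //; nra.
have avg_eq : (x ^+ 2 * (mu ^+ 2 + v) - x ^+ 2 * mu ^+ 2) / k.+1%:R
    = x ^+ 2 * Num.sqrt (v / (x - 1)) ^+ 2.
  have x1_gt0 : 0 < x - 1 by rewrite subr_gt0.
  rewrite -x_k sqr_sqrtr ?divr_ge0 ?(ltW x1_gt0) //.
  by rewrite -mulrBr (addrC _ v) addrK mulrA.
have A0_gt0 : 0 < x ^+ 2 * mu ^+ 2 by rewrite mulr_gt0 ?exprn_gt0.
have det_le := sqr_det_le_orthomx M HHT; rewrite sumM2 -/x in det_le.
have := le_trans det_le (ler_mul_exprn_avg (ltn0Sn k) A0_gt0 g_ge g_le sum_le).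
rewrite avg_eq; set q := Num.sqrt _ => sqr_det_le.
have q_ge0 : 0 <= q by rewrite sqrtr_ge0.
have bound_ge0 : 0 <= x ^+ k.+2 * mu * q ^+ k.+1.
  exact: mulr_ge0 (mulr_ge0 (exprn_ge0 _ (ltW x_gt0)) (ltW mu_gt0)) (exprn_ge0 _ q_ge0).
rewrite -(@ler_pXn2r _ 2) ?nnegrE ?normr_ge0 // (real_normK (num_real _)).
apply: le_trans sqr_det_le _; rewrite le_eqVlt; apply/orP; left; apply/eqP.
rewrite (exprS x k.+1) !exprMn.
set X := x ^+ k.+1; set Q := q ^+ k.+1; ring.
Qed.

End DeterminantBound.

Lemma sum_entries_perm (R : numDomainType) n a (M : 'M[R]_n) (f : R -> R) :
  entries_perm_from a M ->
  \sum_i \sum_j f (M i j) = \sum_(k <- iota a (n ^ 2)) f k%:R.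
Proof.
move=> hM; rewrite -(big_map (fun k : nat => k%:R : R) xpredT f) -(perm_big _ hM).
by rewrite /mx_entries big_map big_enum pair_big.
Qed.

Section IotaSums.
Variable R : numFieldType.

Lemma sum_iota_natr a N :
  \sum_(k <- iota a N) (k%:R : R) = N%:R * (a%:R + (N%:R - 1) / 2).
Proof.
elim: N => [|N IH]; first by rewrite big_nil mul0r.
by rewrite -addn1 iotaD big_cat IH /= big_seq1 !natrD; field.
Qed.

Lemma sum_iota_sqr_natr a N :
  \sum_(k <- iota a N) (k%:R : R) ^+ 2
    = N%:R * ((a%:R + (N%:R - 1) / 2) ^+ 2 + (N%:R ^+ 2 - 1) / 12).
Proof.
elim: N => [|N IH]; first by rewrite big_nil mul0r.
by rewrite -addn1 iotaD big_cat IH /= big_seq1 !natrD; field.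
Qed.

End IotaSums.

Lemma det_le_entries_iota (R : rcfType) n a (M : 'M[R]_n) :
    (1 < n)%N -> entries_perm_from a M ->
  `|\det M| <= n%:R ^+ n * (a%:R + (n%:R ^+ 2 - 1) / 2)
               * Num.sqrt ((n%:R ^+ 3 + n%:R ^+ 2 + n%:R + 1) / 12) ^+ (n - 1).
Proof.
move=> n_gt1 hM; set x : R := n%:R.
have x_ge2 : 2 <= x by rewrite (ler_nat R 2).
have -> : (x ^+ 3 + x ^+ 2 + x + 1) / 12 = ((x ^+ 2) ^+ 2 - 1) / 12 / (x - 1).
  by field; rewrite subr_eq0 gt_eqF // (lt_le_trans _ x_ge2) ?ltr1n.
have sumM := sum_entries_perm id hM; have sumM2 := sum_entries_perm (fun y => y ^+ 2) hM.
rewrite sum_iota_natr natrX -/x in sumM; rewrite sum_iota_sqr_natr natrX -/x in sumM2.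
apply: det_le_mean_var => //.
- by rewrite ltr_wpDl ?ler0n // divr_gt0 //; nra.
rewrite -/x; set mu := a%:R + _.
have half_ge0 : 0 <= (x ^+ 2 - 1) / 2 by nra.
have half_le_mu : (x ^+ 2 - 1) / 2 <= mu by rewrite lerDr ler0n.
apply: le_trans (_ : _ <= (x - 1) * ((x ^+ 2 - 1) / 2) ^+ 2) _.
  rewrite -subr_ge0 (_ : _ - _ = (x ^+ 2 - 1) * ((x - 2) * (3 * x ^+ 2 + 2 * x + 1) + 4) / 12).
    by rewrite divr_ge0 // mulr_ge0 //; nra.
  by field.
apply: ler_wpM2l; first lra.
by rewrite lerXn2r ?nnegrE // (le_trans half_ge0).
Qed.

Theorem mainTheorem8 (R : rcfType) (n : nat) (hn : (2 <= n)%N) :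
  (forall M : 'M[R]_n, entries_perm_from 0 M ->
     `|\det M| <= (n%:R) ^+ n * (((n%:R) ^+ 2 - 1) / 2)
                  * (Num.sqrt (((n%:R) ^+ 3 + (n%:R) ^+ 2 + n%:R + 1) / 12)) ^+ (n - 1))
  /\
  (forall M : 'M[R]_n, entries_perm_from 1 M ->
     `|\det M| <= (n%:R) ^+ n * (((n%:R) ^+ 2 + 1) / 2)
                  * (Num.sqrt (((n%:R) ^+ 3 + (n%:R) ^+ 2 + n%:R + 1) / 12)) ^+ (n - 1)).
Proof.
split=> M /(det_le_entries_iota hn); first by rewrite add0r.
by rewrite (_ : 1%:R + _ = ((n%:R : R) ^+ 2 + 1) / 2) //; field.
Qed.
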